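(* Let $m>0$ and let $U:[0,\infty)\to\mathbb{R}$ satisfy: $U\in C^{2}((0,\infty))\cap C^{1}([0,\infty))$, $U(0)=0$, $U'(q)>0$ for all $q>0$, and for each $E>0$ there is a unique $q_{\max}(E)>0$ with $U(q_{\max}(E))=E$. Consider trajectories $q(t)\ge 0$ of the conservative system $m\ddot q+U'(q)=0$, which conserve the energy $E=\frac12 m\dot q^2+U(q)$. Fix arbitrary constants $K>0$ and $M>0$. Define the energy coordinate \[ x(q)=\sqrt{\frac{2U(q)}{K}}, \] and define a reparametrised time $\tau$ along the trajectory by \[ \frac{d\tau}{dt}=\sqrt{\frac{M}{m}}\,\frac{dx}{dq}(q(t)). \] Then along every nontrivial conservative trajectory, $x$ as a function of $\tau$ satisfies \[ M\frac{d^{2}x}{d\tau^{2}}+Kx=0 . \]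
   Context: $q$ is the contact penetration, $m$ the mass, $U$ the contact potential; a nontrivial trajectory is one with energy $E>0$. *)

From Stdlib Require Import Reals.
From Coquelicot Require Import Coquelicot.
Open Scope R_scope.

Definition xcoord (K : R) (U : R -> R) (r : R) : R := sqrt (2 * U r / K).

(* Standing assumptions on the contact potential U : [0,oo) -> R, with
   U1 playing the role of U':
   - U in C^2((0,oo)): U' = U1 on (0,oo), U1 differentiable there with a
     continuous derivative U2;
   - U in C^1([0,oo)): U continuous from the right at 0 with right derivative
     U1 0 at 0, and U1 right-continuous at 0;
   - U(0) = 0, U'(q) > 0 for q > 0;
   - for every E > 0 there is a unique q_max(E) > 0 with U(q_max(E)) = E. *)
Definition admissible_potential (U U1 : R -> R) : Prop :=
  (exists U2 : R -> R,
     forall r, 0 < r ->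
       is_derive U r (U1 r) /\ is_derive U1 r (U2 r) /\ continuous U2 r) /\
  filterlim U (at_right 0) (locally (U 0)) /\
  filterlim (fun h => (U h - U 0) / h) (at_right 0) (locally (U1 0)) /\
  filterlim U1 (at_right 0) (locally (U1 0)) /\
  U 0 = 0 /\
  (forall r, 0 < r -> 0 < U1 r) /\
  (forall E, 0 < E -> exists! qm, 0 < qm /\ U qm = E).

(* Put p := v / sqrt (M/m).  Since x dx/dq = U'/K, the equation of motion turns into
   dx/dt = tau' p and dp/dt = - (K/M) tau' x: in the time tau the pair (x, p) solves
   the harmonic oscillator.  Instead of inverting tau, compare (x, p) with the explicit
   oscillation X(tau), X'(tau) having the same data at one instant: the difference
   solves the same linear system, so its energy M P^2 + K D^2 is conserved and hence
   identically 0.  The only place where the energy E > 0 enters is q > 0: at an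
   interior zero of q >= 0 the velocity vanishes, which would force E = U(0) = 0. *)
From Stdlib Require Import Reals Lra.
From Coquelicot Require Import Coquelicot.
Open Scope R_scope.

Lemma is_derive_eq (f : R -> R) (x l l' : R) :
  is_derive f x l -> l = l' -> is_derive f x l'.
Proof. intros Hf <-; exact Hf. Qed.

Lemma constant_of_derive_zero (f : R -> R) (a b t0 t : R) :
  (forall s, a < s < b -> is_derive f s 0) ->
  a < t0 < b -> a < t < b -> f t = f t0.
Proof.
intros Hf Ht0 Ht.
assert (Hmvt : forall u v, a < u -> u < v -> v < b -> f v = f u).
{ intros u v Hu Huv Hv.
  destruct (MVT_cor2 f (fun _ => 0) u v Huv) as [c [Hc _]].
  - intros c Hc. apply is_derive_Reals, Hf. lra.
  - lra. }
destruct (Rtotal_order t t0) as [Hlt | [-> | Hgt]].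
- symmetry. apply Hmvt; lra.
- reflexivity.
- apply Hmvt; lra.
Qed.

Section AdmissiblePotential.

Variables U U1 : R -> R.
Hypothesis HU : admissible_potential U U1.

Lemma admissible_potential_derive (r : R) : 0 < r -> is_derive U r (U1 r).
Proof. destruct HU as [[U2 HU2] _]. intros Hr. apply HU2, Hr. Qed.

Lemma admissible_potential_increasing (r s : R) : 0 < r -> r < s -> U r < U s.
Proof.
destruct HU as [_ [_ [_ [_ [_ [HU1 _]]]]]]. intros Hr Hrs.
destruct (MVT_cor2 U U1 r s Hrs) as [c [Hc Hcrs]].
- intros c Hc. apply is_derive_Reals, admissible_potential_derive. lra.
- assert (0 < U1 c) by (apply HU1; lra). nra.
Qed.

(* U(0) = 0 bounds U(r/2) from below through the right limit of U at 0. *)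
Lemma admissible_potential_pos (r : R) : 0 < r -> 0 < U r.
Proof.
destruct HU as [_ [HU0 [_ [_ [U_0 _]]]]]. intros Hr.
assert (Hhalf : U 0 <= U (r / 2)).
{ apply (filterlim_le (F := at_right 0) U (fun _ => U (r / 2)) (U 0) (U (r / 2))).
  - exists (mkposreal (r / 2) ltac:(lra)). intros y Hy Hy0.
    apply Rlt_le, admissible_potential_increasing; [exact Hy0|].
    apply Rabs_lt_between in Hy. simpl in Hy. unfold minus, plus, opp in Hy. simpl in Hy. lra.
  - exact HU0.
  - apply filterlim_const. }
pose proof (admissible_potential_increasing (r / 2) r ltac:(lra) ltac:(lra)). lra.
Qed.

End AdmissiblePotential.

Lemma xcoord_derive (K : R) (U U1 : R -> R) (r : R) :
  0 < K -> is_derive U r (U1 r) -> 0 < U r ->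
  is_derive (xcoord K U) r (U1 r / (K * xcoord K U r)).
Proof.
intros HK HdU HUr.
assert (Harg : 0 < 2 * U r / K) by (apply Rdiv_lt_0_compat; lra).
assert (Hsqrt : 0 < sqrt (2 * U r / K)) by (apply sqrt_lt_R0, Harg).
assert (Hdarg : is_derive (fun r => 2 * U r / K) r (2 * U1 r / K)).
{ apply (is_derive_ext (fun r => / K * (2 * U r))).
  - intros t. unfold Rdiv. apply Rmult_comm.
  - apply (is_derive_eq _ _ (/ K * (2 * U1 r))); [|field; lra].
    apply is_derive_scal, is_derive_scal, HdU. }
unfold xcoord.
apply (is_derive_eq _ _ _ _ (is_derive_sqrt _ r _ Hdarg Harg)).
field. split; lra.
Qed.

Lemma trajectory_pos (U : R -> R) (m a b E : R) (q v : R -> R) :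
  U 0 = 0 -> 0 < E ->
  (forall t, a < t < b -> 0 <= q t /\ is_derive q t (v t)) ->
  (forall t, a < t < b -> / 2 * m * (v t) ^ 2 + U (q t) = E) ->
  forall t, a < t < b -> 0 < q t.
Proof.
intros U_0 HE Hq Henergy t Ht.
destruct (Hq t Ht) as [[Hpos | Hzero] Hdq]; [exact Hpos | exfalso].
assert (Hv : v t = 0).
{ apply (deriv_minimum q a b t (exist _ (v t) (proj1 (is_derive_Reals q t (v t)) Hdq)));
    try apply Ht.
  intros s Has Hsb. rewrite <- Hzero. apply Hq. lra. }
pose proof (Henergy t Ht) as Et. rewrite <- Hzero, U_0, Hv in Et. lra.
Qed.

Section ReparamOscillator.

Variables a b k : R.

(* The harmonic oscillator y'' = - k y written in a time with derivative g. *)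
Definition reparam_oscillator (g y p : R -> R) : Prop :=
  forall t, a < t < b ->
    is_derive y t (g t * p t) /\ is_derive p t (- k * (g t * y t)).

Lemma reparam_oscillator_sub (g y1 p1 y2 p2 : R -> R) :
  reparam_oscillator g y1 p1 -> reparam_oscillator g y2 p2 ->
  reparam_oscillator g (fun t => y1 t - y2 t) (fun t => p1 t - p2 t).
Proof.
intros H1 H2 t Ht.
destruct (H1 t Ht) as [Hy1 Hp1], (H2 t Ht) as [Hy2 Hp2].
split.
- apply (is_derive_eq _ _ _ _ (is_derive_minus _ _ _ _ _ Hy1 Hy2)).
  unfold minus, plus, opp; simpl. ring.
- apply (is_derive_eq _ _ _ _ (is_derive_minus _ _ _ _ _ Hp1 Hp2)).
  unfold minus, plus, opp; simpl. ring.
Qed.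

Lemma reparam_oscillator_energy_const (g y p : R -> R) (t0 t : R) :
  reparam_oscillator g y p -> a < t0 < b -> a < t < b ->
  p t ^ 2 + k * y t ^ 2 = p t0 ^ 2 + k * y t0 ^ 2.
Proof.
intros Hosc.
apply (constant_of_derive_zero (fun t => p t ^ 2 + k * y t ^ 2)).
intros s Hs. destruct (Hosc s Hs) as [Hy Hp].
apply (is_derive_eq _ _ _ _
  (is_derive_plus _ _ _ _ _ (is_derive_pow _ 2 _ _ Hp)
     (is_derive_scal _ _ k _ (is_derive_pow _ 2 _ _ Hy)))).
unfold plus, scal; simpl; unfold mult; simpl. ring.
Qed.

Lemma reparam_oscillator_unique (g y1 p1 y2 p2 : R -> R) (t0 : R) :
  0 < k -> reparam_oscillator g y1 p1 -> reparam_oscillator g y2 p2 ->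
  a < t0 < b -> y1 t0 = y2 t0 -> p1 t0 = p2 t0 ->
  forall t, a < t < b -> y1 t = y2 t.
Proof.
intros Hk H1 H2 Ht0 Hy0 Hp0 t Ht.
pose proof (reparam_oscillator_energy_const _ _ _ t0 t
              (reparam_oscillator_sub _ _ _ _ _ H1 H2) Ht0 Ht) as Henergy.
simpl in Henergy. rewrite Hy0, Hp0, !Rminus_diag in Henergy.
assert (0 <= (p1 t - p2 t) ^ 2) by (apply pow2_ge_0).
assert (0 <= k * (y1 t - y2 t) ^ 2) by (apply Rmult_le_pos; [lra | apply pow2_ge_0]).
assert (Hsq : (y1 t - y2 t) ^ 2 = 0).
{ apply (Rmult_eq_reg_l k); [lra | lra]. }
apply Rminus_diag_uniq, Rsqr_0_uniq. rewrite Rsqr_pow2. exact Hsq.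
Qed.

Lemma reparam_oscillator_comp (tau g X X1 : R -> R) :
  (forall t, a < t < b -> is_derive tau t (g t)) ->
  (forall s, is_derive X s (X1 s)) -> (forall s, is_derive X1 s (- k * X s)) ->
  reparam_oscillator g (fun t => X (tau t)) (fun t => X1 (tau t)).
Proof.
intros Htau HX HX1 t Ht. split.
- exact (is_derive_comp X tau t _ _ (HX _) (Htau t Ht)).
- apply (is_derive_eq _ _ _ _ (is_derive_comp X1 tau t _ _ (HX1 _) (Htau t Ht))).
  unfold scal; simpl; unfold mult; simpl. ring.
Qed.

End ReparamOscillator.

Lemma trajectory_reparam_oscillator (m K M : R) (U U1 : R -> R) (a b : R)
    (q v acc : R -> R) :
  0 < m -> 0 < K -> 0 < M ->
  (forall t, a < t < b -> is_derive U (q t) (U1 (q t)) /\ 0 < U (q t)) ->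
  (forall t, a < t < b ->
     is_derive q t (v t) /\ is_derive v t (acc t) /\ m * acc t + U1 (q t) = 0) ->
  reparam_oscillator a b (K / M)
    (fun t => sqrt (M / m) * Derive (xcoord K U) (q t))
    (fun t => xcoord K U (q t)) (fun t => v t / sqrt (M / m)).
Proof.
intros Hm HK HM HUq Htraj t Ht.
destruct (HUq t Ht) as [HdU HUpos], (Htraj t Ht) as [Hdq [Hdv Hmotion]].
pose proof (xcoord_derive K U U1 (q t) HK HdU HUpos) as Hdx.
rewrite (is_derive_unique _ _ _ Hdx).
assert (Hx : 0 < xcoord K U (q t)) by (apply sqrt_lt_R0, Rdiv_lt_0_compat; lra).
set (s := sqrt (M / m)).
assert (Hs : 0 < s) by (apply sqrt_lt_R0, Rdiv_lt_0_compat; lra).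
assert (HMs : M = m * (s * s)).
{ unfold s. rewrite sqrt_sqrt; [field; lra | apply Rlt_le, Rdiv_lt_0_compat; lra]. }
split.
- apply (is_derive_eq _ _ _ _ (is_derive_comp _ q t _ _ Hdx Hdq)).
  unfold scal; simpl; unfold mult; simpl. field. lra.
- apply (is_derive_eq _ _ _ _ (is_derive_scal_l v _ _ (/ s) Hdv)).
  assert (Hacc : acc t = - U1 (q t) / m) by (field_simplify_eq; lra).
  rewrite Hacc, HMs. unfold scal; simpl; unfold mult; simpl. field. repeat split; lra.
Qed.

Definition oscillation (w A B s0 s : R) : R :=
  A * cos (w * (s - s0)) + B * sin (w * (s - s0)).

Lemma oscillation_origin (w A B s0 : R) : oscillation w A B s0 s0 = A.
Proof. unfold oscillation. rewrite Rminus_diag, Rmult_0_r, cos_0, sin_0. ring. Qed.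

Lemma is_derive_oscillation (w A B s0 s : R) :
  is_derive (oscillation w A B s0) s (oscillation w (w * B) (- (w * A)) s0 s).
Proof. unfold oscillation. auto_derive; [exact I | unfold Rminus; ring]. Qed.

Lemma is_derive2_oscillation (w A B s0 s : R) :
  is_derive (oscillation w (w * B) (- (w * A)) s0) s
    (- (w * w) * oscillation w A B s0 s).
Proof.
apply (is_derive_eq _ _ _ _ (is_derive_oscillation _ _ _ _ _)).
unfold oscillation. ring.
Qed.

Theorem theorem2
  (m K M : R) (U U1 : R -> R) (a b E : R) (q v acc tau : R -> R) :
  0 < m -> 0 < K -> 0 < M ->
  admissible_potential U U1 ->
  a < b ->
  (* q is a C^2 trajectory on (a,b) with q >= 0, velocity v, acceleration acc *)
  (forall t, a < t < b ->
     0 <= q t /\ is_derive q t (v t) /\ is_derive v t (acc t) /\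
     m * acc t + U1 (q t) = 0) ->
  (* conserved energy, nontrivial trajectory *)
  0 < E ->
  (forall t, a < t < b -> / 2 * m * (v t) ^ 2 + U (q t) = E) ->
  (* reparametrised time: d tau / dt = sqrt(M/m) * (dx/dq)(q(t)) *)
  (forall t, a < t < b ->
     is_derive tau t (sqrt (M / m) * Derive (xcoord K U) (q t))) ->
  (* x, as a function of tau, satisfies M x'' + K x = 0 *)
  exists X X1 X2 : R -> R,
    forall t, a < t < b ->
      X (tau t) = xcoord K U (q t) /\
      is_derive X (tau t) (X1 (tau t)) /\
      is_derive X1 (tau t) (X2 (tau t)) /\
      M * X2 (tau t) + K * X (tau t) = 0.
Proof.
intros Hm HK HM HU Hab Htraj HE Henergy Htau.
assert (Hq : forall t, a < t < b -> 0 < q t).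
{ apply (trajectory_pos U m a b E q v); try assumption.
  - apply HU.
  - intros t Ht. destruct (Htraj t Ht) as [Hq0 [Hdq _]]. split; assumption. }
set (s := sqrt (M / m)). set (w := sqrt (K / M)). set (t0 := (a + b) / 2).
assert (Ht0 : a < t0 < b) by (unfold t0; lra).
assert (Hs : 0 < s) by (apply sqrt_lt_R0, Rdiv_lt_0_compat; lra).
assert (Hw : 0 < w) by (apply sqrt_lt_R0, Rdiv_lt_0_compat; lra).
assert (Hww : w * w = K / M) by (apply sqrt_sqrt, Rlt_le, Rdiv_lt_0_compat; lra).
set (A := xcoord K U (q t0)). set (B := v t0 / (s * w)).
set (X := oscillation w A B (tau t0)).
set (X1 := oscillation w (w * B) (- (w * A)) (tau t0)).
assert (HX1 : forall y, is_derive X1 y (- (K / M) * X y)).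
{ intros y. rewrite <- Hww. apply is_derive2_oscillation. }
assert (Hx : reparam_oscillator a b (K / M) (fun t => s * Derive (xcoord K U) (q t))
               (fun t => xcoord K U (q t)) (fun t => v t / s)).
{ apply (trajectory_reparam_oscillator m K M U U1 a b q v acc); try assumption.
  - intros t Ht. split.
    + apply (admissible_potential_derive U U1 HU), Hq, Ht.
    + apply (admissible_potential_pos U U1 HU), Hq, Ht.
  - intros t Ht. apply (Htraj t Ht). }
assert (HX : reparam_oscillator a b (K / M) (fun t => s * Derive (xcoord K U) (q t))
               (fun t => X (tau t)) (fun t => X1 (tau t))).
{ apply reparam_oscillator_comp; [exact Htau | apply is_derive_oscillation | exact HX1]. }
assert (HX0 : X1 (tau t0) = v t0 / s).
{ unfold X1. rewrite oscillation_origin. unfold B. field. lra. }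
exists X, X1, (fun y => - (K / M) * X y). intros t Ht. split; [|split; [|split]].
- exact (reparam_oscillator_unique a b (K / M) _ _ _ _ _ t0 ltac:(apply Rdiv_lt_0_compat; lra)
           HX Hx Ht0 (oscillation_origin _ _ _ _) HX0 t Ht).
- apply is_derive_oscillation.
- apply HX1.
- field. lra.
Qed.
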